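(* Let $(\mathbb{K},\partial)$ be a differential field whose field of constants $C$ is algebraically closed of characteristic zero, let $L\in\mathbb{K}[\partial]$ be of order $n$ in normal form, and let $\mathcal{G}=\{G_0=1,G_1,\ldots,G_{t-1}\}$ be a Goodearl basis of $\mathcal{C}(L)$ as a $C[L]$-module. Then the differential ideal $[\mathrm{BC}(L)]$ is a prime ideal of $\mathbb{K}[\lambda,\mu_1,\ldots,\mu_{t-1}]$.
   Context: $L=\partial^n+u_{n-2}\partial^{n-2}+\dots+u_0$. $\mathcal{C}(L)=\{A\in\mathbb{K}[\partial]:LA=AL\}$. A Goodearl basis is a $C[L]$-module basis $\{G_0=1,\ldots,G_{t-1}\}$ of $\mathcal{C}(L)$ in which each $G_k$ has minimal order among $Q\in\mathcal{C}(L)$ with $\mathrm{ord}(Q)\equiv\mathrm{ord}(G_k)\pmod n$ and the classes $\mathrm{ord}(G_k)\bmod n$ are pairwise distinct and exhaust the classes mod $n$ of orders of elements of $\mathcal{C}(L)$. $\mathrm{BC}(L)\subset C[\lambda,\mu_1,\ldots,\mu_{t-1}]$ is the kernel of the $C$-algebra map $\phi_L$: $\lambda\mapsto L$, $\mu_i\mapsto G_i$. $[\mathrm{BC}(L)]$ is the differential ideal generated by $\mathrm{BC}(L)$ in $\mathbb{K}[\lambda,\mu_1,\ldots,\mu_{t-1}]$, whose derivation extends $\partial$ on coefficients with $\partial(\lambda)=\partial(\mu_i)=0$. *)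

From HB Require Import structures.
From mathcomp Require Import all_boot all_order all_algebra.
From mathcomp Require Import mpoly.
Set Implicit Arguments. Unset Strict Implicit. Unset Printing Implicit Defensive.
Import Order.TTheory GRing.Theory.
Local Open Scope ring_scope.

Section DiffOps.
Variables (K : fieldType) (d : K -> K).

Definition is_derivation : Prop :=
  (forall x y, d (x + y) = d x + d y) /\ (forall x y, d (x * y) = d x * y + x * d y).

Definition is_const (x : K) : bool := d x == 0.

Definition constants_alg_closed : Prop :=
  forall p : {poly K}, (forall i, is_const p`_i) -> (1 < size p)%N ->
    exists2 x, is_const x & root p x.

(* Differential operators K[∂]: A : {poly K} represents sum_i A`_i ∂^i
   (coefficients on the left).  Multiplication is the Ore product with
   ∂ a = a ∂ + d a. *)
Definition dop_dmul (B : {poly K}) : {poly K} := 'X * B + map_poly d B.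

Definition dop_mul (A B : {poly K}) : {poly K} :=
  \sum_(i < size A) A`_i *: iter i dop_dmul B.

Definition dop_exp (A : {poly K}) (k : nat) : {poly K} := iter k (dop_mul A) 1.

Definition dop_ord (A : {poly K}) : nat := (size A).-1.

Definition normal_form (n : nat) (L : {poly K}) : Prop :=
  size L = n.+1 /\ lead_coef L = 1 /\ ((0 < n)%N -> L`_n.-1 = 0).

Definition in_centralizer (L A : {poly K}) : Prop := dop_mul L A = dop_mul A L.

Definition const_poly (p : {poly K}) : Prop := forall i, is_const p`_i.

Definition dop_eval (p : {poly K}) (L : {poly K}) : {poly K} :=
  \sum_(i < size p) p`_i *: dop_exp L i.

Definition is_CL_basis (L : {poly K}) (t : nat) (G : 'I_t -> {poly K}) : Prop :=
  [/\ (forall k, in_centralizer L (G k)),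
      (forall A, in_centralizer L A ->
         exists p : 'I_t -> {poly K}, (forall k, const_poly (p k)) /\
           A = \sum_(k < t) dop_mul (dop_eval (p k) L) (G k)) &
      (forall p : 'I_t -> {poly K}, (forall k, const_poly (p k)) ->
         \sum_(k < t) dop_mul (dop_eval (p k) L) (G k) = 0 -> forall k, p k = 0)].

Definition is_Goodearl_basis (n : nat) (L : {poly K}) (t : nat) (G : 'I_t -> {poly K}) : Prop :=
  [/\ @is_CL_basis L t G,
      (0 < t)%N /\ (forall k : 'I_t, val k = 0%N -> G k = 1),
      (forall k, G k != 0 /\
         forall Q, in_centralizer L Q -> Q != 0 ->
           dop_ord Q = dop_ord (G k) %[mod n] -> (dop_ord (G k) <= dop_ord Q)%N),
      (forall k l, dop_ord (G k) = dop_ord (G l) %[mod n] -> k = l) &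
      (forall Q, in_centralizer L Q -> Q != 0 ->
         exists k, dop_ord Q = dop_ord (G k) %[mod n])].

(* Polynomial ring K[λ, μ_1, ..., μ_{t-1}] = {mpoly K[t]}:
   variable 0 is λ, variable k >= 1 is μ_k. *)
Definition phi_gen (L : {poly K}) (t : nat) (G : 'I_t -> {poly K}) (k : 'I_t) : {poly K} :=
  if val k == 0%N then L else G k.

Definition phi_L (L : {poly K}) (t : nat) (G : 'I_t -> {poly K}) (P : {mpoly K[t]}) : {poly K} :=
  \sum_(m <- msupp P)
     P@_m *: \big[dop_mul/1]_(k < t) dop_exp (phi_gen L G k) (m k).

Definition BC (L : {poly K}) (t : nat) (G : 'I_t -> {poly K}) (P : {mpoly K[t]}) : Prop :=
  (forall m, is_const P@_m) /\ phi_L L G P = 0.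

Definition mpoly_der (t : nat) (P : {mpoly K[t]}) : {mpoly K[t]} :=
  \sum_(m <- msupp P) d P@_m *: 'X_[m].

End DiffOps.

Definition is_ideal (R : comRingType) (I : R -> Prop) : Prop :=
  [/\ I 0, (forall a b, I a -> I b -> I (a + b)) & (forall r a, I a -> I (r * a))].

Definition prime_ideal (R : comRingType) (I : R -> Prop) : Prop :=
  [/\ is_ideal I, ~ I 1 & forall a b, I (a * b) -> I a \/ I b].

Definition diff_ideal_gen (K : fieldType) (d : K -> K) (t : nat)
    (S : {mpoly K[t]} -> Prop) (P : {mpoly K[t]}) : Prop :=
  forall I : {mpoly K[t]} -> Prop, is_ideal I -> (forall x, S x -> I x) ->
    (forall x, I x -> I (mpoly_der d x)) -> I P.

From HB Require Import structures.
From mathcomp Require Import all_boot all_order all_algebra.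
From mathcomp Require Import mpoly.
From mathcomp Require Import ring zify.
Set Implicit Arguments. Unset Strict Implicit. Unset Printing Implicit Defensive.
Import GRing.Theory.
Local Open Scope ring_scope.

(* Let phi be the K-linear extension of φ_L to K[λ, μ], with values in K[∂].
   The images L, G_1, ..., G_(t-1) lie in the centralizer C(L), which is
   commutative, so phi(p q) = sum_m q_m phi(p) phi(X^m).  Elements of C(L)
   have constant leading coefficients, so a finite family in C(L) can be put
   in echelon form by subtracting constant multiples.  Hence a K-linear
   relation sum_j b_j X_j = 0 in C(L) implies sum_j d(b_j) X_j = 0, making
   ker phi a differential ideal, and sum_j b_j X_j <> 0 implies
   sum_j b_j Y X_j <> 0 for Y <> 0, making ker phi prime.  Finally
   ker phi = [BC(L)], by induction on the support: a kernel element q with a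
   coefficient 1 either has constant coefficients, and then lies in BC(L),
   or q = (q - c q') + c q' with q' its derivative and c in K chosen to
   cancel a non-constant coefficient; both summands are kernel elements of
   smaller support. *)

Lemma uniq_size_lt (T : eqType) (s1 s2 : seq T) x :
  uniq s1 -> {subset s1 <= s2} -> x \in s2 -> x \notin s1 -> (size s1 < size s2)%N.
Proof.
move=> u1 sub x2 x1; apply: (uniq_leq_size (s1 := x :: s1)); first by rewrite /= x1.
by move=> y; rewrite inE => /predU1P[->|/sub].
Qed.

Lemma sum_scale_shift (R : pzRingType) (V : lmodType R) (I : Type) (s : seq I)
    (b kappa : I -> R) (Z : I -> V) (z : V) :
  \sum_(j <- s) b j *: (Z j + kappa j *: z) =
    \sum_(j <- s) b j *: Z j + (\sum_(j <- s) b j * kappa j) *: z.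
Proof.
by rewrite scaler_suml -big_split; apply: eq_bigr => j _; rewrite scalerDr scalerA.
Qed.

Section LeadingTerms.
Variable R : nzRingType.
Implicit Types p q : {poly R}.

Lemma size_lead_coefD_eqsize p q :
  size p = size q -> lead_coef p + lead_coef q != 0 ->
  size (p + q) = size p /\ lead_coef (p + q) = lead_coef p + lead_coef q.
Proof.
move=> spq nz; have top : (p + q)`_(size p).-1 = lead_coef p + lead_coef q.
  by rewrite coefD /lead_coef spq.
have p0 : (0 < size p)%N.
  rewrite lt0n; apply: contra nz => /eqP sp0.
  by rewrite /lead_coef -spq sp0 !nth_default ?addr0 // -?spq sp0.
have szpq : size (p + q) = size p.
  apply/eqP; rewrite eqn_leq (leq_trans (size_polyD _ _)) -?spq ?maxnn //=.
  rewrite -(prednK p0) ltnNge.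
  by apply: contra nz => /leq_sizeP vanish; rewrite -top vanish.
by split; rewrite // /lead_coef szpq.
Qed.

Lemma size_polyB_eqlead p q m :
  size p = m.+1 -> size q = m.+1 -> lead_coef p = lead_coef q -> (size (p - q)%R <= m)%N.
Proof.
move=> sp sq lpq; apply/leq_sizeP => j; rewrite leq_eqVlt coefB => /orP[/eqP <-|mj].
  by move: lpq; rewrite /lead_coef sp sq => ->; rewrite subrr.
by rewrite !nth_default ?subrr ?sp ?sq.
Qed.

End LeadingTerms.

Section OreProduct.
Variables (K : fieldType) (d : K -> K).
Hypothesis derivation_d : is_derivation d.

Lemma derD x y : d (x + y) = d x + d y. Proof. by case: derivation_d. Qed.
Lemma derM x y : d (x * y) = d x * y + x * d y. Proof. by case: derivation_d. Qed.

Lemma der_is_zmod_morphism : zmod_morphism d.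
Proof. by move=> x y; apply: (@addIr _ (d y)); rewrite -derD !subrK. Qed.

(* Local: keyed on the variable [d], a global instance would fire on every function. *)
#[local] HB.instance Definition _ := GRing.isZmodMorphism.Build K K d der_is_zmod_morphism.

Lemma der0 : d 0 = 0. Proof. exact: raddf0. Qed.

Lemma der_sum (I : Type) (r : seq I) (P : pred I) (F : I -> K) :
  d (\sum_(i <- r | P i) F i) = \sum_(i <- r | P i) d (F i).
Proof. exact: raddf_sum. Qed.

Lemma der1 : d 1 = 0.
Proof.
apply: (@addrI _ (d 1)).
by rewrite addr0 -{1}(mulr1 (d 1)) -{2}(mul1r (d 1)) -derM mulr1.
Qed.

Lemma der_nat k : d k%:R = 0.
Proof. by rewrite raddfMn /= der1 mul0rn. Qed.

Lemma derM0 a b : d a = 0 -> d b = 0 -> d (a * b) = 0.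
Proof. by move=> da db; rewrite derM da db mulr0 mul0r addr0. Qed.

Lemma derX0 a k : d a = 0 -> d (a ^+ k) = 0.
Proof. by move=> da; elim: k => [|k IH]; rewrite ?der1 // exprS derM0. Qed.

Lemma derV0 a : d a = 0 -> d a^-1 = 0.
Proof.
move=> da; have [->|a0] := eqVneq a 0; first by rewrite invr0 der0.
have := der1; rewrite -(mulfV a0) derM da mul0r add0r => /eqP.
by rewrite mulf_eq0 (negbTE a0) => /eqP.
Qed.

Local Notation D := (dop_dmul d).
Local Notation "A ** B" := (dop_mul d A B) (at level 40, left associativity).
Implicit Types (A B C : {poly K}) (c : K).

Lemma coef_dop_dmul B i : (D B)`_i = (if i is j.+1 then B`_j else 0) + d B`_i.
Proof. by rewrite /dop_dmul coefD coefXM coef_map_id0 ?der0 //; case: i. Qed.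

Lemma dop_dmul_is_zmod_morphism : zmod_morphism D.
Proof. by move=> A B; rewrite /dop_dmul mulrBr raddfB addrACA opprD. Qed.

#[local] HB.instance Definition _ :=
  GRing.isZmodMorphism.Build {poly K} {poly K} D dop_dmul_is_zmod_morphism.

Lemma dop_dmulZ c B : D (c *: B) = c *: D B + d c *: B.
Proof.
apply/polyP=> i; rewrite [RHS]coefD !coefZ !coef_dop_dmul coefZ derM.
by case: i => [|j]; rewrite ?coefZ; ring.
Qed.

Definition dop_dmuln i : {poly K} -> {poly K} := iter i D.

Lemma dop_dmulnD i A B : dop_dmuln i (A + B) = dop_dmuln i A + dop_dmuln i B.
Proof. by elim: i => [//|i IH]; rewrite /dop_dmuln /= -!/(dop_dmuln _ _) IH raddfD. Qed.

Lemma dop_dmulnS i B : dop_dmuln i.+1 B = D (dop_dmuln i B). Proof. by []. Qed.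

Lemma dop_dmulnZ c i B : d c = 0 -> dop_dmuln i (c *: B) = c *: dop_dmuln i B.
Proof.
by move=> dc; elim: i => [//|i IH]; rewrite !dop_dmulnS IH dop_dmulZ dc scale0r addr0.
Qed.

Lemma dop_dmuln1 i : dop_dmuln i 1 = 'X^i.
Proof.
elim: i => [|i IH]; first by rewrite expr0.
rewrite dop_dmulnS IH; apply/polyP=> j.
by rewrite coef_dop_dmul !coefXn der_nat addr0; case: j => [|j]; rewrite ?coefXn.
Qed.

Lemma size_dop_dmuln i B : (size (dop_dmuln i B) <= size B + i)%N.
Proof.
elim: i => [|i IH]; first by rewrite addn0.
apply/leq_sizeP => -[|j]; rewrite addnS // ltnS => hj.
by rewrite dop_dmulnS coef_dop_dmul !nth_default ?der0 ?addr0 // (leq_trans IH) // ltnW.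
Qed.

Lemma coef_dop_dmuln_out i B j : (size B + i <= j)%N -> (dop_dmuln i B)`_j = 0.
Proof. by move=> hj; rewrite nth_default // (leq_trans (size_dop_dmuln _ _)). Qed.

Lemma coef_dop_dmuln_top i B s : (size B <= s.+1)%N ->
  (dop_dmuln i B)`_(s + i) = B`_s.
Proof.
move=> hB; elim: i => [|i IH]; first by rewrite addn0.
rewrite dop_dmulnS coef_dop_dmul addnS IH coef_dop_dmuln_out ?der0 ?addr0 //.
by rewrite -addSn leq_add2r.
Qed.

Lemma coef_dop_dmuln_subtop i B s : (size B <= s.+2)%N ->
  (dop_dmuln i B)`_(s + i) = B`_s + d B`_s.+1 *+ i.
Proof.
move=> hB; elim: i => [|i IH]; first by rewrite addn0 mulr0n addr0.
rewrite dop_dmulnS coef_dop_dmul addnS IH -addSn coef_dop_dmuln_top //.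
by rewrite mulrSr addrA.
Qed.

Lemma dop_mulE A B : A ** B = \sum_(i < size A) A`_i *: dop_dmuln i B.
Proof. by []. Qed.

Lemma dop_mul_widen A B N : (size A <= N)%N ->
  A ** B = \sum_(i < N) A`_i *: dop_dmuln i B.
Proof.
move=> le; rewrite dop_mulE (big_ord_widen N (fun i => A`_i *: dop_dmuln i B) le).
rewrite big_mkcond /=; apply: eq_bigr => i _; case: ltnP => // /(nth_default 0) ->.
by rewrite scale0r.
Qed.

Lemma coef_dop_mul A B j :
  (A ** B)`_j = \sum_(i < size A) A`_i * (dop_dmuln i B)`_j.
Proof. by rewrite dop_mulE coef_sum; apply: eq_bigr => i _; rewrite coefZ. Qed.

Lemma dop_mul0l B : 0 ** B = 0.
Proof. by rewrite dop_mulE size_poly0 big_ord0. Qed.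

Lemma dop_mulDl A B C : (A + B) ** C = A ** C + B ** C.
Proof.
set N := maxn (size A) (size B).
rewrite !(@dop_mul_widen _ _ N) ?leq_maxl ?leq_maxr ?(leq_trans (size_polyD _ _)) //.
by rewrite -big_split; apply: eq_bigr => i _; rewrite coefD scalerDl.
Qed.

Lemma dop_mulDr A B C : A ** (B + C) = A ** B + A ** C.
Proof.
by rewrite !dop_mulE -big_split; apply: eq_bigr => i _; rewrite dop_dmulnD scalerDr.
Qed.

Lemma dop_mulZl c A B : (c *: A) ** B = c *: (A ** B).
Proof.
rewrite !(@dop_mul_widen _ _ (size A)) ?size_scale_leq // scaler_sumr.
by apply: eq_bigr => i _; rewrite coefZ scalerA.
Qed.

Lemma dop_mulZr c A B : d c = 0 -> A ** (c *: B) = c *: (A ** B).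
Proof.
move=> dc; rewrite !dop_mulE scaler_sumr; apply: eq_bigr => i _.
by rewrite dop_dmulnZ // !scalerA mulrC.
Qed.

Lemma dop_mul1l B : 1 ** B = B.
Proof. by rewrite dop_mulE size_poly1 big_ord1 coefC eqxx scale1r. Qed.

Lemma dop_mul1r A : A ** 1 = A.
Proof.
rewrite dop_mulE -[RHS]coefK poly_def; apply: eq_bigr => i _.
by rewrite dop_dmuln1.
Qed.

Lemma dop_dmul_mul B C : D (B ** C) = D B ** C.
Proof.
rewrite [D B]/dop_dmul dop_mulDl.
have -> : map_poly d B ** C = \sum_(i < size B) d B`_i *: dop_dmuln i C.
  rewrite (@dop_mul_widen _ _ (size B)); last exact: size_poly.
  by apply: eq_bigr => i _; rewrite coef_map_id0 ?der0.
have -> : ('X * B) ** C = \sum_(i < size B) B`_i *: dop_dmuln i.+1 C.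
  rewrite (@dop_mul_widen _ _ (size B).+1); last first.
    by rewrite (leq_trans (size_polyMleq _ _)) // size_polyX.
  by rewrite big_ord_recl coefXM eqxx scale0r add0r; apply: eq_bigr => i _; rewrite coefXM.
by rewrite -big_split dop_mulE raddf_sum; apply: eq_bigr => i _; rewrite [LHS]/= dop_dmulZ.
Qed.

Lemma dop_mulA A B C : A ** (B ** C) = (A ** B) ** C.
Proof.
have dmuln_mul i : dop_dmuln i (B ** C) = dop_dmuln i B ** C.
  by elim: i => [//|i IH]; rewrite !dop_dmulnS IH dop_dmul_mul.
rewrite [A ** B]dop_mulE.
rewrite (big_morph (fun X => X ** C) (fun X Y => dop_mulDl X Y C) (dop_mul0l C)).
by rewrite dop_mulE; apply: eq_bigr => i _; rewrite dmuln_mul dop_mulZl.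
Qed.

End OreProduct.

(* K[∂] with the Ore product as a ring; the type carries the derivation proof
   because associativity depends on it. *)
Definition dop (K : fieldType) (d : K -> K) (Hd : is_derivation d) : Type := {poly K}.
HB.instance Definition _ (K : fieldType) d (Hd : is_derivation d) :=
  GRing.Lmodule.copy (@dop K d Hd) {poly K}.
HB.instance Definition _ (K : fieldType) d (Hd : is_derivation d) :=
  GRing.Zmodule_isNzRing.Build (@dop K d Hd) (dop_mulA Hd) (@dop_mul1l K d)
    (dop_mul1r Hd) (@dop_mulDl K d) (dop_mulDr Hd) (oner_neq0 {poly K}).
HB.instance Definition _ (K : fieldType) d (Hd : is_derivation d) :=
  GRing.Lmodule_isLalgebra.Build K (@dop K d Hd)
    (fun c (x y : dop Hd) => esym (dop_mulZl d c x y)).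

Section OperatorDegree.
Variables (K : fieldType) (d : K -> K).
Hypothesis derivation_d : is_derivation d.
Local Notation "A ** B" := (dop_mul d A B) (at level 40, left associativity).
Implicit Types (A B : {poly K}).

Lemma size_dop_mul_leq A B : (size (A ** B) <= (size A + size B).-1)%N.
Proof.
apply/leq_sizeP => j hj; rewrite coef_dop_mul big1 // => i _.
rewrite coef_dop_dmuln_out ?mulr0 //; apply: leq_trans hj; have := ltn_ord i; lia.
Qed.

Lemma coef_dop_mul_top A B a b : size A = a.+1 -> (size B <= b.+1)%N ->
  (A ** B)`_(a + b) = A`_a * B`_b.
Proof.
move=> sA sB; rewrite coef_dop_mul sA big_ord_recr big1 /= ?add0r.
  by rewrite addnC coef_dop_dmuln_top.
by move=> i _; rewrite coef_dop_dmuln_out ?mulr0 //; have := ltn_ord i; lia.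
Qed.

Lemma coef_dop_mul_subtop A B a b : (size A <= a.+2)%N -> (size B <= b.+2)%N ->
  (A ** B)`_(a + b).+1 =
    A`_a.+1 * B`_b + A`_a * B`_b.+1 + A`_a.+1 * d B`_b.+1 *+ a.+1.
Proof.
move=> sA sB; rewrite (dop_mul_widen _ _ sA) coef_sum !big_ord_recr big1 /= ?add0r.
  rewrite !coefZ -addnS addnC coef_dop_dmuln_top // -dop_dmulnS addSnnS.
  by rewrite coef_dop_dmuln_subtop // mulrDr mulrnAr addrCA addrA.
by move=> i _; rewrite coefZ coef_dop_dmuln_out ?mulr0 //; have := ltn_ord i; lia.
Qed.

End OperatorDegree.

Section DifferentialIdeals.
Variables (K : fieldType) (d : K -> K) (t : nat) (S : {mpoly K[t]} -> Prop).
Local Notation I := (diff_ideal_gen d S).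

Lemma diff_ideal_gen_is_ideal : is_ideal I.
Proof.
split=> [J [J0 _ _] _ _ //|p q Ip Iq J idJ SJ derJ|r p Ip J idJ SJ derJ].
  by case: (idJ) => _ JD _; apply: JD; [apply: Ip | apply: Iq].
by case: (idJ) => _ _ JM; apply: JM; apply: Ip.
Qed.

Lemma diff_ideal_gen_base p : S p -> I p.
Proof. by move=> Sp J _ SJ _; apply: SJ. Qed.

Lemma diff_ideal_genD p q : I p -> I q -> I (p + q).
Proof. by case: diff_ideal_gen_is_ideal => _ + _; apply. Qed.

Lemma diff_ideal_genZ c p : I p -> I (c *: p).
Proof. by rewrite -mul_mpolyC; case: diff_ideal_gen_is_ideal => _ _; apply. Qed.

Lemma coef_mpoly_der p (m : 'X_{1..t}) : d 0 = 0 -> (mpoly_der d p)@_m = d p@_m.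
Proof.
move=> d0; rewrite /mpoly_der raddf_sum /=.
under eq_bigr => m' _ do rewrite mcoeffZ mcoeffX.
have [mp|mNp] := boolP (m \in msupp p).
  rewrite (bigD1_seq m) ?msupp_uniq //= eqxx mulr1 big1 ?addr0 // => m' /negbTE.
  by rewrite eq_sym => ->; rewrite mulr0.
rewrite big_seq big1 => [|m' m'p]; first by rewrite memN_msupp_eq0.
by case: eqP => [e|_]; [rewrite -e m'p in mNp | rewrite mulr0].
Qed.

End DifferentialIdeals.

Section OperatorRing.
Variables (K : fieldType) (d : K -> K).
Hypothesis derivation_d : is_derivation d.
Local Notation R := (dop derivation_d).
Local Notation sz A := (size (A%R : {poly K})).
Local Notation lc A := (lead_coef (A : {poly K})).
Implicit Types (A B X Y Z P : R) (c : K).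

Lemma dop_scalerAr c A B : d c = 0 -> A * (c *: B) = c *: (A * B).
Proof. exact: dop_mulZr. Qed.

Lemma dop_comm_const c A : d c = 0 -> GRing.comm c%:A A.
Proof. by move=> dc; rewrite /GRing.comm mulr_algl dop_scalerAr // mulr1. Qed.

Lemma size_lead_coef_dop_mul A B : A != 0 -> B != 0 ->
  sz (A * B) = (sz A + sz B).-1 /\ lc (A * B) = lc A * lc B.
Proof.
rewrite -!size_poly_gt0 => A0 B0.
have [a sA] : {a | sz A = a.+1} by exists (sz A).-1; rewrite prednK.
have [b sB] : {b | sz B = b.+1} by exists (sz B).-1; rewrite prednK.
have top : (A * B : {poly K})`_(a + b) = lc A * lc B.
  by rewrite /lead_coef sA sB; apply: coef_dop_mul_top; rewrite ?sB.
have nz : lc A * lc B != 0.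
  by rewrite mulf_neq0 // lead_coef_eq0 -size_poly_gt0 ?sA ?sB.
have szAB : sz (A * B) = (a + b).+1.
  apply/eqP; rewrite eqn_leq (leq_trans (size_dop_mul_leq _ _ _)) ?sA ?sB ?addnS //=.
  by rewrite ltnNge; apply: contra nz => /leq_sizeP vanish; rewrite -top vanish.
split; first by rewrite sA sB addnS.
by rewrite /lead_coef szAB.
Qed.

Lemma size_dop_mul A B : A != 0 -> B != 0 -> sz (A * B) = (sz A + sz B).-1.
Proof. by move=> A0 B0; case: (size_lead_coef_dop_mul A0 B0). Qed.

Lemma lead_coef_dop_mul A B : lc (A * B) = lc A * lc B.
Proof.
have [->|A0] := eqVneq A 0; first by rewrite mul0r lead_coef0 mul0r.
have [->|B0] := eqVneq B 0; first by rewrite mulr0 lead_coef0 mulr0.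
by case: (size_lead_coef_dop_mul A0 B0).
Qed.

Lemma size_dop_exp Y k : Y != 0 -> sz (Y ^+ k) = (k * (sz Y).-1).+1.
Proof.
move=> Y0; elim: k => [|k IH]; first by rewrite expr0 size_poly1.
have Yk0 : Y ^+ k != 0 by rewrite -size_poly_gt0 IH.
rewrite exprS size_dop_mul // IH mulSn.
by have := Y0; rewrite -size_poly_gt0; lia.
Qed.

Lemma lead_coef_dop_exp Y k : lc (Y ^+ k) = lc Y ^+ k.
Proof.
by elim: k => [|k IH]; rewrite ?expr0 ?lead_coef1 // exprS lead_coef_dop_mul IH -exprS.
Qed.

End OperatorRing.

Section Centralizer.
Variables (K : fieldType) (d : K -> K).
Hypothesis derivation_d : is_derivation d.
Local Notation R := (dop derivation_d).
Local Notation sz A := (size (A%R : {poly K})).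
Local Notation lc A := (lead_coef (A : {poly K})).
Implicit Types (X Y Z P : R) (c : K).

Hypothesis char0 : [pchar K] =i pred0.

Lemma natr_succ_neq0 k : k.+1%:R != 0 :> K.
Proof. by move/pcharf0P: char0 => ->. Qed.

Variables (n : nat) (L : R).
Hypotheses (size_L : sz L = n.+1) (monic_L : lc L = 1) (n_gt0 : (0 < n)%N).

Lemma L_neq0 : L != 0. Proof. by rewrite -size_poly_gt0 size_L. Qed.

(* For Y = X L, of order at least 1, the subleading coefficients of L Y and
   Y L differ by n d(lc Y). *)
Lemma der_lead_coef_centralizer X : GRing.comm L X -> d (lc X) = 0.
Proof.
move=> cLX; have [->|X0] := eqVneq X 0; first by rewrite lead_coef0 der0.
have cLY : GRing.comm L (X * L) by apply: commrM.
have [szY lcY] := size_lead_coef_dop_mul X0 L_neq0.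
rewrite monic_L mulr1 size_L in lcY szY; rewrite -lcY.
have [b sY] : {b | sz (X * L) = b.+2}.
  by exists (sz X + n).-2; rewrite szY; have := X0; rewrite -size_poly_gt0; lia.
have sL : sz L = n.-1.+2 by rewrite size_L prednK.
have L1 : (L : {poly K})`_n.-1.+1 = 1 by rewrite -monic_L /lead_coef sL.
have := congr1 (fun Q : R => (Q : {poly K})`_(n.-1 + b).+1) cLY => /=.
rewrite [in LHS]coef_dop_mul_subtop ?sL ?sY // addnC.
rewrite [in RHS]coef_dop_mul_subtop ?sL ?sY // L1 (der1 derivation_d) mulr0 mul0rn addr0.
rewrite !mul1r mulr1 /lead_coef sY.
set Yb := _`_b; set Y1 := _`_b.+1; set La := _`_n.-1 => E.
have : d Y1 *+ n.-1.+1 = 0.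
  by apply: (@addrI _ (Yb + La * Y1)); rewrite addr0 E mulrC addrC.
by move/eqP; rewrite -mulr_natl mulf_eq0 (negbTE (natr_succ_neq0 _)) => /eqP.
Qed.

Section Bracket.
Variable P : R.
Hypothesis cLP : GRing.comm L P.
Let bracket Y := P * Y - Y * P.

Lemma bracketM Y Z : bracket (Y * Z) = bracket Y * Z + Y * bracket Z.
Proof. by rewrite /bracket mulrBl mulrBr !mulrA addrA subrK. Qed.

Lemma size_lead_coef_bracketX Y k : bracket Y != 0 ->
  sz (bracket (Y ^+ k.+1)) = (sz (bracket Y) + k * (sz Y).-1)%N /\
  lc (bracket (Y ^+ k.+1)) = k.+1%:R * lc (bracket Y) * lc Y ^+ k.
Proof.
move=> bY0; have Y0 : Y != 0.
  by apply: contraNneq bY0 => ->; rewrite /bracket mulr0 mul0r subrr.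
have := bY0; rewrite -size_poly_gt0 => sbY; have := Y0; rewrite -size_poly_gt0 => sY.
elim: k => [|k [IHs IHl]]; first by rewrite mul0n addn0 expr1 mul1r expr0 mulr1.
have bYk0 : bracket (Y ^+ k.+1) != 0 by rewrite -size_poly_gt0 IHs addn_gt0 sbY.
have Yk0 : Y ^+ k.+1 != 0 by rewrite -size_poly_gt0 size_dop_exp.
have [s1 l1] := size_lead_coef_dop_mul bY0 Yk0.
have [s2 l2] := size_lead_coef_dop_mul Y0 bYk0.
rewrite size_dop_exp // lead_coef_dop_exp in s1 l1; rewrite IHs in s2; rewrite IHl in l2.
have lsum : lc (bracket Y * Y ^+ k.+1) + lc (Y * bracket (Y ^+ k.+1)) =
    k.+2%:R * lc (bracket Y) * lc Y ^+ k.+1.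
  by rewrite l1 l2 exprS; ring.
have nz : lc (bracket Y * Y ^+ k.+1) + lc (Y * bracket (Y ^+ k.+1)) != 0.
  by rewrite lsum !mulf_neq0 ?natr_succ_neq0 ?expf_neq0 ?lead_coef_eq0.
have s12 : sz (bracket Y * Y ^+ k.+1) = sz (Y * bracket (Y ^+ k.+1)).
  by rewrite s1 s2; lia.
have [s3 l3] := size_lead_coefD_eqsize s12 nz.
rewrite exprS bracketM; split; last by rewrite l3 lsum.
by rewrite s3 s1; lia.
Qed.

(* For Z = Y^n - lc(Y)^n L^(ord Y), ord Z < n ord Y while
   ord [P, Z] = ord [P, Y^n] = ord [P, Y] + (n - 1) ord Y, so the defect
   ord Z + ord P - ord [P, Z] drops. *)
Lemma bracket_descent Y : GRing.comm L Y -> bracket Y != 0 ->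
  exists2 Z, GRing.comm L Z /\ bracket Z != 0 &
    (sz Z + sz P - sz (bracket Z) < sz Y + sz P - sz (bracket Y))%N.
Proof.
move=> cLY bY0.
have Y0 : Y != 0 by apply: contraNneq bY0 => ->; rewrite /bracket mulr0 mul0r subrr.
have P0 : P != 0.
  by apply: contraNneq bY0; rewrite /bracket => ->; rewrite mulr0 mul0r subrr.
set x := (sz Y).-1; set c := lc Y ^+ n.
have dc : d c = 0 by apply: derX0 => //; apply: der_lead_coef_centralizer.
have c0 : c != 0 by rewrite expf_neq0 ?lead_coef_eq0.
set W := c%:A * L ^+ x.
have cLW : GRing.comm L W.
  by apply: commrM; [apply/commr_sym/dop_comm_const | apply/commrX/commr_refl].
have cPW : GRing.comm P W.
  by apply: commrM; [apply/commr_sym/dop_comm_const | apply/commrX/commr_sym].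
have bZ : bracket (Y ^+ n - W) = bracket (Y ^+ n).
  by rewrite /bracket mulrBr mulrBl cPW opprB addrA subrK.
have [sbYn _] := size_lead_coef_bracketX n.-1 bY0; rewrite prednK // in sbYn.
exists (Y ^+ n - W).
  split; first by apply: commrB => //; apply: commrX.
  by rewrite bZ -size_poly_gt0 sbYn addn_gt0 size_poly_gt0 bY0.
have szW : sz W = (n * x).+1 /\ lc W = c.
  rewrite /W mulr_algl size_scale // lead_coefZ lead_coef_dop_exp monic_L expr1n mulr1.
  by rewrite size_dop_exp ?L_neq0 // size_L mulnC.
have szZ : (sz (Y ^+ n - W) <= n * x)%N.
  by apply: size_polyB_eqlead; rewrite ?size_dop_exp ?lead_coef_dop_exp; case: szW.
have bnd : (sz (bracket Y) <= x + sz P)%N.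
  rewrite (leq_trans (size_polyD _ _)) // size_polyN geq_max.
  by rewrite !size_dop_mul //; have := Y0; rewrite -size_poly_gt0 /x; lia.
rewrite bZ sbYn; move: szZ bnd; rewrite /x; have := Y0; rewrite -size_poly_gt0.
by case: n n_gt0 => // n' _; rewrite mulSn; lia.
Qed.

Lemma bracket_eq0 Y : GRing.comm L Y -> bracket Y = 0.
Proof.
move=> cLY; have [k] := ubnP (sz Y + sz P - sz (bracket Y)).
elim: k Y cLY => // k IH Y cLY lt_mu; apply/eqP; apply: contraT => bY0.
have [Z [cLZ bZ0] lt_muZ] := bracket_descent cLY bY0.
by move: bZ0; rewrite (IH Z) ?eqxx //; apply: leq_trans lt_muZ _.
Qed.

End Bracket.

Lemma centralizer_comm P X : GRing.comm L P -> GRing.comm L X -> GRing.comm P X.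
Proof. by move=> cLP cLX; apply/eqP; rewrite -subr_eq0 bracket_eq0. Qed.

Section LinearCombinations.
Variable T : eqType.
Implicit Types (s : seq T) (b : T -> K) (F : T -> R).

Lemma size_comb_leq s b (Z : T -> R) N : (forall j, j \in s -> (sz (Z j) <= N)%N) ->
  (sz (\sum_(j <- s) b j *: Z j) <= N)%N.
Proof.
move=> sZ; apply: leq_trans (size_sum _ _ _) _; apply/bigmax_leqP_seq => j js _.
by rewrite (leq_trans (size_scale_leq _ _)) ?sZ.
Qed.

Lemma centralizer_reduce s F N j0 :
  {in s, forall j, GRing.comm L (F j)} -> {in s, forall j, sz (F j) <= N.+1}%N ->
  GRing.comm L (F j0) -> sz (F j0) = N.+1 ->
  exists kappa : T -> K, [/\ {in s, forall j, d (kappa j) = 0},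
    {in s, forall j, GRing.comm L (F j - kappa j *: F j0)} &
    {in s, forall j, sz (F j - kappa j *: F j0) <= N}%N].
Proof.
move=> cLF sF cLF0 sF0; have lc0 : lc (F j0) != 0.
  by rewrite lead_coef_eq0 -size_poly_gt0 sF0.
pose kappa j := (F j : {poly K})`_N / lc (F j0).
have dkappa : {in s, forall j, d (kappa j) = 0}.
  move=> j js; rewrite derM0 ?derV0 ?der_lead_coef_centralizer //.
  have := sF j js; rewrite leq_eqVlt => /orP[/eqP sFj|sFj].
    by have := der_lead_coef_centralizer (cLF j js); rewrite /lead_coef sFj.
  by rewrite nth_default ?(der0 derivation_d).
exists kappa; split=> // j js.
  apply: commrB; first exact: cLF.
  rewrite -[_ *: F j0]mulr_algl; apply: commrM => //.
  exact/commr_sym/dop_comm_const/dkappa.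
apply/leq_sizeP => i; rewrite leq_eqVlt => /orP[/eqP <-|Ni]; rewrite coefB coefZ.
  by rewrite [(F j0 : {poly K})`_N](_ : _ = lc (F j0)) ?mulfVK ?subrr // /lead_coef sF0.
by rewrite !nth_default ?mulr0 ?subrr ?sF0 // (leq_trans (sF j js)).
Qed.

Lemma bounded_family s (F : T -> R) : exists N, {in s, forall j, sz (F j) <= N}%N.
Proof. by exists (\max_(j <- s) sz (F j)) => j js; apply: leq_bigmax_seq. Qed.

Lemma centralizer_comb_der s b F : {in s, forall j, GRing.comm L (F j)} ->
  \sum_(j <- s) b j *: F j = 0 -> \sum_(j <- s) d (b j) *: F j = 0.
Proof.
have [N] := bounded_family s F; elim: N F => [|N IH] F sF cLF hsum.
  by rewrite big_seq big1 // => j /sF; rewrite size_poly_leq0 => /eqP->; rewrite scaler0.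
have [/hasP[j0 j0s /eqP sF0]|/hasPn small] := boolP (has (fun j => sz (F j) == N.+1) s);
  last by apply: IH => // j js; rewrite -ltnS ltn_neqAle small ?sF.
have [kappa [dk cLF' sF']] := centralizer_reduce cLF sF (cLF j0 j0s) sF0.
have decomp (c : T -> K) : \sum_(j <- s) c j *: F j =
    \sum_(j <- s) c j *: (F j - kappa j *: F j0) + (\sum_(j <- s) c j * kappa j) *: F j0.
  by rewrite -sum_scale_shift; apply: eq_bigr => j _; rewrite subrK.
pose beta := \sum_(j <- s) b j * kappa j.
have beta0 : beta = 0.
  have := congr1 (fun p : R => (p : {poly K})`_N) hsum; rewrite /= decomp coefD coefZ.
  rewrite nth_default ?(size_comb_leq _ sF') // add0r coef0 => /eqP.
  rewrite mulf_eq0 [_`_N](_ : _ = lc (F j0)) ?lead_coef_eq0 ?/lead_coef ?sF0 //.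
  by rewrite -size_poly_eq0 sF0 orbF => /eqP.
rewrite decomp -/beta beta0 scale0r addr0 in hsum.
have dbeta : \sum_(j <- s) d (b j) * kappa j = d beta.
  rewrite der_sum // big_seq_cond [RHS]big_seq_cond; apply: eq_bigr => j /andP[js _].
  by rewrite (derM derivation_d) dk // mulr0 addr0.
by rewrite decomp (IH _ sF') // dbeta beta0 (der0 derivation_d) scale0r addr0.
Qed.

Lemma centralizer_comb_mul_neq0 s b F Y : {in s, forall j, GRing.comm L (F j)} ->
  Y != 0 -> \sum_(j <- s) b j *: F j != 0 -> \sum_(j <- s) b j *: (Y * F j) != 0.
Proof.
move=> + Y0; have [N] := bounded_family s F; elim: N F => [|N IH] F sF cLF hsum.
  move: hsum; rewrite big_seq big1 ?eqxx // => j /sF.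
  by rewrite size_poly_leq0 => /eqP->; rewrite scaler0.
have [/hasP[j0 j0s /eqP sF0]|/hasPn small] := boolP (has (fun j => sz (F j) == N.+1) s);
  last by apply: IH => // j js; rewrite -ltnS ltn_neqAle small ?sF.
have [kappa [dk cLF' sF']] := centralizer_reduce cLF sF (cLF j0 j0s) sF0.
pose beta := \sum_(j <- s) b j * kappa j.
have hsumE : \sum_(j <- s) b j *: F j =
    \sum_(j <- s) b j *: (F j - kappa j *: F j0) + beta *: F j0.
  by rewrite -sum_scale_shift; apply: eq_bigr => j _; rewrite subrK.
rewrite hsumE in hsum.
have -> : \sum_(j <- s) b j *: (Y * F j) =
    \sum_(j <- s) b j *: (Y * (F j - kappa j *: F j0)) + beta *: (Y * F j0).
  rewrite -sum_scale_shift big_seq [RHS]big_seq; apply: eq_bigr => j js.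
  by rewrite -[kappa j *: (Y * F j0)]dop_scalerAr ?dk // -mulrDr subrK.
have [beta0|beta_neq0] := eqVneq beta 0.
  rewrite beta0 scale0r addr0 in hsum; rewrite beta0 scale0r addr0.
  exact: (IH (fun j => F j - kappa j *: F j0)).
have F00 : F j0 != 0 by rewrite -size_poly_gt0 sF0.
have sY : (0 < sz Y)%N by rewrite size_poly_gt0.
rewrite addrC -size_poly_gt0 size_polyDl size_scale // size_dop_mul // sF0 addnS /=.
  by rewrite addn_gt0 sY.
apply: leq_ltn_trans (size_comb_leq (N := (sz Y + N).-1) _ _) _ => [j js|].
  by rewrite (leq_trans (size_dop_mul_leq _ _ _)) // -!subn1 leq_sub2r // leq_add2l sF'.
by rewrite ltn_predL addn_gt0 sY.
Qed.

End LinearCombinations.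

Section Realization.
Variables (t : nat) (G : 'I_t -> {poly K}).
Hypothesis cLG : forall k, GRing.comm L (G k : R).
Implicit Types (p q : {mpoly K[t]}) (m : 'X_{1..t}).

Definition gen (k : 'I_t) : R := phi_gen L G k.
Definition mono m : R := mmap1 gen m.
Definition phi p : R := mmap (in_alg R) gen p.
HB.instance Definition _ := GRing.Additive.copy phi (mmap (in_alg R) gen).

Lemma comm_gen k : GRing.comm L (gen k).
Proof. by rewrite /gen /phi_gen; case: eqP. Qed.

Lemma comm_mono m : GRing.comm L (mono m).
Proof. by apply: commr_prod => k _; apply/commrX/comm_gen. Qed.

Lemma monoD m1 m2 : mono (m1 + m2) = mono m1 * mono m2.
Proof.
rewrite /mono /mmap1 -prodrM_comm => [|i j _ _]; last first.
  by apply/commrX/commr_sym/commrX/centralizer_comm; apply: comm_gen.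
by apply: eq_bigr => i _; rewrite mnmDE exprD.
Qed.

Lemma phiE p : phi p = \sum_(m <- msupp p) p@_m *: mono m.
Proof. by apply: eq_bigr => m _; rewrite mulr_algl. Qed.

Lemma phi_LE p : phi_L d L G p = phi p.
Proof.
rewrite phiE; apply: eq_bigr => m _; congr (_ *: _).
by apply: eq_bigr => k _; elim: (m k) => [|e IH]; rewrite ?expr0 // exprS -IH.
Qed.

Lemma phiZ c p : phi (c *: p) = c *: phi p.
Proof. by rewrite /phi mmapZ mulr_algl. Qed.

Lemma phiX m : phi 'X_[m] = mono m.
Proof. exact: mmapX. Qed.

Lemma phi1 : phi 1 = 1.
Proof. by rewrite -mpolyC1 /phi mmapC /= scale1r. Qed.

Lemma phiMX p m : phi (p * 'X_[m]) = phi p * mono m.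
Proof.
rewrite {1}(mpolyE p) big_distrl raddf_sum /= phiE mulr_suml.
by apply: eq_bigr => m' _; rewrite -scalerAl -mpolyXD phiZ phiX monoD scalerAl.
Qed.

Lemma phiM p q : phi (p * q) = \sum_(m <- msupp q) q@_m *: (phi p * mono m).
Proof.
rewrite {1}(mpolyE q) big_distrr raddf_sum /=.
by apply: eq_bigr => m _; rewrite -scalerAr phiZ phiMX.
Qed.

Local Notation ker_phi p := (phi p = 0).
Local Notation DI := (diff_ideal_gen d (BC d L G)).

Lemma ker_phi_der p : ker_phi p -> ker_phi (mpoly_der d p).
Proof.
rewrite phiE /mpoly_der raddf_sum /= => p0.
under eq_bigr => m _ do rewrite phiZ phiX.
by apply: centralizer_comb_der p0 => m _; apply: comm_mono.
Qed.

Lemma diff_ideal_sub_ker p : DI p -> ker_phi p.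
Proof.
move/(_ (fun q => ker_phi q)); apply; last exact: ker_phi_der.
  split=> [|p1 p2 e1 e2|r p1 e1]; first exact: raddf0.
    by rewrite raddfD /= e1 e2 addr0.
  by rewrite mulrC phiM e1 big1 // => m _; rewrite mul0r scaler0.
by move=> q [_]; rewrite phi_LE.
Qed.

(* If some coefficient of [q] is not a constant, subtracting a multiple of the
   derivative of [q] removes it while staying in the kernel. *)
Lemma ker_sub_diff_ideal_step q m0 :
  (forall r, (size (msupp r) < size (msupp q))%N -> ker_phi r -> DI r) ->
  ker_phi q -> q@_m0 = 1 -> DI q.
Proof.
move=> IH q0 qm0; have d0 := der0 derivation_d.
have IHq r : {subset msupp r <= msupp q} -> {m | m \in msupp q & m \notin msupp r} ->
    ker_phi r -> DI r.
  by move=> sub [m mq mr]; apply: IH; apply: uniq_size_lt (msupp_uniq r) sub mq mr.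
have [const|/allPn[m1 m1q dm1]] := boolP (all (fun m => d q@_m == 0) (msupp q)).
  apply: diff_ideal_gen_base; split; last by rewrite phi_LE.
  move=> m; have [/(allP const) //|mq] := boolP (m \in msupp q).
  by rewrite /is_const memN_msupp_eq0 // d0.
set r := mpoly_der d q.
have sub_r : {subset msupp r <= msupp q}.
  by move=> m; rewrite !mcoeff_msupp coef_mpoly_der //; apply: contraNneq => ->; rewrite d0.
have r0 : ker_phi r := ker_phi_der q0.
have Dr : DI r.
  apply: IHq => //; exists m0; first by rewrite mcoeff_msupp qm0 oner_neq0.
  by rewrite mcoeff_msupp coef_mpoly_der // qm0 (der1 derivation_d) eqxx.
set c := q@_m1 / d q@_m1.
rewrite -[q](subrK (c *: r)); apply: diff_ideal_genD; last exact: diff_ideal_genZ.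
apply: IHq; last by rewrite raddfB /= [phi (c *: r)]phiZ q0 r0 scaler0 subr0.
  by move=> m /msuppB_le; rewrite mem_cat => /orP[//|/msuppZ_le/sub_r].
exists m1 => //; rewrite mcoeff_msupp mcoeffB [(c *: r)@_m1]mcoeffZ.
by rewrite coef_mpoly_der // mulfVK ?subrr ?eqxx.
Qed.

Lemma ker_sub_diff_ideal p : ker_phi p -> DI p.
Proof.
have [k] := ubnP (size (msupp p)); elim: k p => // k IH p sz_p p0.
have [->|pn0] := eqVneq p 0; first by case: (diff_ideal_gen_is_ideal d (BC d L G)).
have c0 : p@_(mlead p) != 0 by rewrite mleadc_eq0.
rewrite -[p]scale1r -(mulfV c0) -scalerA; apply: diff_ideal_genZ.
apply: (ker_sub_diff_ideal_step (m0 := mlead p)) => [r||].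
- rewrite (perm_size (msuppZ _ (invr_neq0 c0))) => lt_r; apply: IH.
  exact: leq_trans lt_r _.
- by rewrite phiZ p0 scaler0.
- by rewrite mcoeffZ mulVf.
Qed.


Lemma diff_ideal_BC_prime : prime_ideal DI.
Proof.
split; first exact: diff_ideal_gen_is_ideal.
  by move/diff_ideal_sub_ker; rewrite phi1; apply/eqP/oner_neq0.
move=> p q /diff_ideal_sub_ker/eqP; rewrite phiM => pq0.
have [p0|pn0] := eqVneq (phi p) 0; first by left; apply: ker_sub_diff_ideal.
right; apply: ker_sub_diff_ideal; apply/eqP; apply: contraTT pq0 => qn0.
apply: centralizer_comb_mul_neq0 => //; last by rewrite -phiE.
by move=> m _; apply: comm_mono.
Qed.

End Realization.
End Centralizer.

Lemma Goodearl_order_gt0 (K : fieldType) (d : K -> K) n L t (G : 'I_t -> {poly K}) :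
  is_derivation d -> normal_form n L -> is_Goodearl_basis d n L G -> (0 < n)%N.
Proof.
move=> derivation_d [size_L [monic_L _]] [_ _ _ _ exhaust].
case: n size_L monic_L exhaust => // size_L monic_L exhaust.
have L1 : L = 1.
  have L0 : L`_0 = 1 by rewrite -monic_L /lead_coef size_L.
  by rewrite [L]size1_polyC ?size_L // L0.
pose N := (\sum_(k < t) dop_ord (G k)).+1.
have cLX : in_centralizer d L 'X^N.
  by rewrite /in_centralizer L1 dop_mul1l (dop_mul1r derivation_d).
have [k] := exhaust _ cLX (monic_neq0 (monicXn _ _)).
rewrite !modn0 {1}/dop_ord size_polyXn /= => ordG.
have : (dop_ord (G k) <= \sum_(k < t) dop_ord (G k))%N by rewrite (bigD1 k) //= leq_addr.
by rewrite -ordG /N ltnn.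
Qed.

Theorem corollary6p4 (K : fieldType) (d : K -> K) (n t : nat)
    (L : {poly K}) (G : 'I_t -> {poly K}) :
  is_derivation d ->
  constants_alg_closed d ->
  [pchar K] =i pred0 ->
  normal_form n L ->
  is_Goodearl_basis d n L G ->
  prime_ideal (diff_ideal_gen d (BC d L G)).
Proof.
move=> derivation_d _ char0 normal_L Goodearl_G.
have n_gt0 := Goodearl_order_gt0 derivation_d normal_L Goodearl_G.
case: normal_L Goodearl_G => size_L [monic_L _] [[cLG _ _] _ _ _ _].
exact: (diff_ideal_BC_prime char0 size_L monic_L n_gt0 cLG).
Qed.
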